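(* For all $N\ge1$ and $1\le k\le N$, $\left(\tfrac kN\right)^r e^{-r^2/k}\le E[X_{k,N}]\le \left(\tfrac kN\right)^r e^{r/k}$.
   Context: Fix $r\in(0,1)$. Multitype Yule process: at time $0$ a single individual of type $1$ is born; no deaths; each individual independently gives birth at rate $1$; a newborn has, independently, its parent's type with probability $1-r$ and otherwise a brand-new type. Individuals are numbered in order of birth; if the $k$-th individual born has a type different from its parent, that type is called type $k$. $T_N$ is the time the population reaches size $N$; $X_{k,N}$ is the fraction of individuals at time $T_N$ with type in $\{1,\dots,k\}$. *)

From HB Require Import structures.
From mathcomp Require Import all_boot all_order all_algebra.
From mathcomp Require Import all_classical all_reals all_analysis.
Set Implicit Arguments. Unset Strict Implicit. Unset Printing Implicit Defensive.
Import Order.TTheory GRing.Theory Num.Theory.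
Local Open Scope ring_scope.

(* Embedded jump chain of the multitype Yule process.
   A state is the sequence s of types of individuals 1, ..., size s
   (in order of birth).  At each birth, by the memoryless property of the
   independent rate-1 clocks, the parent is uniform among the size s current
   individuals; the newborn (individual number size s + 1) inherits the parent's
   type with probability 1 - r, and otherwise gets the brand-new type size s + 1. *)
Fixpoint yule_exp (R : realType) (r : R) (n : nat) (f : seq nat -> R)
    (s : seq nat) : R :=
  match n with
  | 0 => f s
  | n'.+1 =>
      \sum_(i < size s)
        (size s)%:R^-1 *
          ((1 - r) * yule_exp r n' f (rcons s (nth 0%N s i))
           + r * yule_exp r n' f (rcons s (size s).+1))
  end.

Definition frac_types_le (R : realType) (N k : nat) (s : seq nat) : R :=
  (count (fun t => (t <= k)%N) s)%:R / N%:R.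

(* E[X_{k,N}]: at time T_N the population has size N, i.e. N - 1 births have
   occurred after the initial individual of type 1. *)
Definition EX (R : realType) (r : R) (k N : nat) : R :=
  yule_exp r (N.-1) (frac_types_le R N k) [:: 1%N].

(* While the population has fewer than k individuals, every newborn gets a
   type in {1, ..., k}.  Afterwards a newborn does so iff its uniformly chosen
   parent does and the type is inherited, so the expected count C_m of such
   individuals in a population of size m satisfies C_(m+1) = C_m (1 + (1-r)/m).
   Hence E[X_{k,N}] = prod_(m = k+1)^N (1 - r/m).  Each factor lies between
   exp(f(m) - f(m-1)) and exp(g(m) - g(m-1)) for the potentials
   f(x) = -r ln x + r^2/x and g(x) = -r ln x - r/x, and the products telescope. *)

From HB Require Import structures.
From mathcomp Require Import all_boot all_order all_algebra.
From mathcomp Require Import all_classical all_reals all_analysis.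
From mathcomp Require Import ring lra.
Import Order.TTheory GRing.Theory Num.Theory.
Local Open Scope ring_scope.

Lemma natr_mulVn {R : numFieldType} m : (0 < m)%N -> (m%:R^-1 : R) *+ m = 1.
Proof. by move=> m0; rewrite -(mulr_natr m%:R^-1) mulVf // pnatr_eq0 -lt0n. Qed.

Lemma natr_count {R : pzSemiRingType} {T : Type} (x0 : T) (p : pred T) s :
  (count p s)%:R = \sum_(i < size s) (p (nth x0 s i))%:R :> R.
Proof.
elim: s => [|x s IH] /=; first by rewrite big_ord0.
by rewrite big_ord_recl natrD IH.
Qed.

Section YuleExp.
Variables (R : realType) (r : R).

Lemma yule_expD n (f g : seq nat -> R) s :
  yule_exp r n (fun t => f t + g t) s = yule_exp r n f s + yule_exp r n g s.
Proof.
elim: n s => [//|n IH] s /=.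
by rewrite -big_split /=; apply: eq_bigr => i _; rewrite !IH; ring.
Qed.

Lemma yule_expZ n a (f : seq nat -> R) s :
  yule_exp r n (fun t => a * f t) s = a * yule_exp r n f s.
Proof.
elim: n s => [//|n IH] s /=.
by rewrite mulr_sumr; apply: eq_bigr => i _; rewrite !IH; ring.
Qed.

Lemma yule_exp_cst n a s : (0 < size s)%N -> yule_exp r n (fun=> a) s = a.
Proof.
elim: n s => [//|n IH] s s0 /=.
under eq_bigr do rewrite !IH ?size_rcons //.
by rewrite sumr_const card_ord -mulrnAl natr_mulVn // mul1r; ring.
Qed.

Lemma yule_expSr n f s : yule_exp r n.+1 f s = yule_exp r n (yule_exp r 1 f) s.
Proof.
elim: n s => [//|n IH] s.
by rewrite [RHS]/=; under [RHS]eq_bigr do rewrite -!IH.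
Qed.

Definition types_bounded (t : seq nat) := all (fun x => x <= size t)%N t.

Lemma types_bounded_rcons t x :
  types_bounded t -> (x <= (size t).+1)%N -> types_bounded (rcons t x).
Proof.
move=> bt xt; rewrite /types_bounded all_rcons size_rcons xt /=.
by apply: sub_all bt => y /leqW.
Qed.

Lemma yule_exp_congr n (f g : seq nat -> R) s : types_bounded s ->
  (forall t, types_bounded t -> size t = (size s + n)%N -> f t = g t) ->
  yule_exp r n f s = yule_exp r n g s.
Proof.
elim: n s => [|n IH] s bs fg /=; first by apply: fg; rewrite ?addn0.
have fgS t : types_bounded t -> size t = ((size s).+1 + n)%N -> f t = g t.
  by rewrite addSnnS; apply: fg.
apply: eq_bigr => i _; congr (_ * (_ * _ + _ * _)); apply: IH; rewrite ?size_rcons //.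
  by apply: types_bounded_rcons => //; apply/leqW/(all_nthP 0%N bs).
by apply: types_bounded_rcons.
Qed.

End YuleExp.

Section CountLe.
Variables (R : realType) (r : R) (k : nat).

Definition count_le (t : seq nat) : R := (count (fun x => x <= k)%N t)%:R.

Lemma count_le_rcons t x : count_le (rcons t x) = count_le t + (x <= k)%N%:R.
Proof. by rewrite /count_le -cats1 count_cat /= addn0 natrD. Qed.

Lemma yule_exp1_count_le t : types_bounded t -> (0 < size t)%N ->
  yule_exp r 1 count_le t =
  if (size t < k)%N then count_le t + 1
  else count_le t * (1 + (1 - r) / (size t)%:R).
Proof.
move=> bt t0 /=; have nt0 : (size t)%:R != 0 :> R by rewrite pnatr_eq0 -lt0n.
case: ifP => tk.
  have nth_le i : (i < size t)%N -> (nth 0%N t i <= k)%N.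
    by move=> it; apply: leq_trans (ltnW tk); apply: (all_nthP 0%N bt).
  under eq_bigr => i _ do rewrite !count_le_rcons nth_le // tk.
  by rewrite sumr_const card_ord -mulrnAl natr_mulVn // mul1r /=; ring.
under eq_bigr => i _ do rewrite !count_le_rcons tk addr0.
rewrite -mulr_sumr big_split /= -mulr_sumr big_split /= !sumr_const card_ord.
rewrite -(natr_count 0%N (fun x => x <= k)%N) -/(count_le t).
by rewrite -[count_le t *+ _]mulr_natr -[r * _ *+ _]mulr_natr; field.
Qed.

Definition expected_count n := yule_exp r n count_le [:: 1%N].

Lemma expected_countS n : expected_count n.+1 =
  if (n.+1 < k)%N then expected_count n + 1
  else expected_count n * (1 + (1 - r) / n.+1%:R).
Proof.
rewrite /expected_count yule_expSr; case: ifP => nk.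
  rewrite (@yule_exp_congr _ _ _ _ (fun t => count_le t + 1)) //.
    by rewrite yule_expD yule_exp_cst.
  by move=> t bt tn; rewrite yule_exp1_count_le ?tn // nk.
rewrite mulrC -yule_expZ; apply: yule_exp_congr => // t bt tn.
by rewrite yule_exp1_count_le ?tn // nk mulrC.
Qed.

Lemma expected_count_lt n : (0 < k)%N -> (n < k)%N -> expected_count n = n.+1%:R.
Proof.
move=> k0; elim: n => [|n IH] nk; first by rewrite /expected_count /= /count_le /= k0.
by rewrite expected_countS nk IH ?natr1 // ltnW.
Qed.

Lemma EX_expected_count N : EX r k N = expected_count N.-1 / N%:R.
Proof.
rewrite /EX /expected_count mulrC -yule_expZ; congr yule_exp.
by apply: funext => t; rewrite /frac_types_le mulrC.
Qed.

Lemma EX_prod N : (0 < k)%N -> (k <= N)%N ->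
  EX r k N = \prod_(k <= m < N) (1 - r / m.+1%:R).
Proof.
move=> k0 /subnKC <-; elim: (N - k)%N => [|d IH].
  rewrite addn0 big_geq // EX_expected_count expected_count_lt ?prednK //.
  by rewrite divff // pnatr_eq0 -lt0n.
set n := (k + d)%N in IH *; have n0 : (0 < n)%N := leq_trans k0 (leq_addr d k).
rewrite addnS big_nat_recr ?leq_addr //= -IH !EX_expected_count /=.
rewrite -[in expected_count n](prednK n0) expected_countS prednK //.
rewrite ltnNge leq_addr /= -/n -natr1.
have nR : n%:R != 0 :> R by rewrite pnatr_eq0 -lt0n.
have n1R : n%:R + 1 != 0 :> R by rewrite natr1 pnatr_eq0.
by field; rewrite nR n1R.
Qed.

End CountLe.

Section Bounds.
Context {R : realType}.

Lemma ln_succ_sub_le (x : R) : 0 < x -> ln (x + 1) - ln x <= x^-1.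
Proof.
move=> x0; rewrite -ln_div ?posrE ?addr_gt0 //.
rewrite mulrDl divff ?gt_eqF // mul1r le_ln1Dx //.
by apply: lt_trans (ltrN10 R) _; rewrite invr_gt0.
Qed.

Lemma ln_succ_sub_ge (x : R) : 0 < x -> (x + 1)^-1 <= ln (x + 1) - ln x.
Proof.
move=> x0; have x1 : 0 < x + 1 by rewrite addr_gt0.
rewrite -[_^-1]opprK lerNl opprB -ln_div ?posrE //.
have -> : x / (x + 1) = 1 + - (x + 1)^-1 by field; rewrite gt_eqF.
apply: le_ln1Dx; rewrite ltrN2 invf_lt1 //; lra.
Qed.

Lemma ln1B_ge (y : R) : 0 <= y < 1 -> - (y / (1 - y)) <= ln (1 - y).
Proof.
case/andP=> y0 y1; have y1' : 0 < 1 - y by rewrite subr_gt0.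
rewrite lerNl -lnV ?posrE //.
have -> : ln (1 - y)^-1 = ln (1 + y / (1 - y)) by congr ln; field; rewrite gt_eqF.
by apply: le_ln1Dx; apply: lt_le_trans (ltrN10 R) _; rewrite divr_ge0 // ltW.
Qed.

Lemma one_sub_div_le_expR (r x : R) : 0 <= r -> 0 < x ->
  1 - r / (x + 1) <= expR ((- (r * ln (x + 1)) - r / (x + 1)) - (- (r * ln x) - r / x)).
Proof.
move=> r0 x0; apply: le_trans (expR_ge1Dx (- (r / (x + 1)))) _; rewrite ler_expR.
have := ler_wpM2l r0 (ln_succ_sub_le x x0); rewrite /(_ / _); lra.
Qed.

Lemma expR_le_one_sub_div (r x : R) : 0 <= r <= 1 -> 0 < x ->
  expR ((- (r * ln (x + 1)) + r ^+ 2 / (x + 1)) - (- (r * ln x) + r ^+ 2 / x))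
  <= 1 - r / (x + 1).
Proof.
case/andP=> r0 r1 x0; have x1 : 0 < x + 1 by rewrite addr_gt0.
have xr : 0 < x + 1 - r by lra.
have y1 : r / (x + 1) < 1 by rewrite ltr_pdivrMr // mul1r; lra.
have y01 : 0 <= r / (x + 1) < 1 by rewrite (divr_ge0 r0 (ltW x1)) y1.
rewrite -[X in _ <= X]lnK ?posrE ?subr_gt0 // ler_expR.
apply: le_trans; last exact: ln1B_ge y01.
have := ler_wpM2l r0 (ln_succ_sub_ge x x0).
have -> : r / (x + 1) / (1 - r / (x + 1)) =
    r / (x + 1) + r ^+ 2 / (x * (x + 1)) - r ^+ 2 * (1 - r) / (x * (x + 1) * (x + 1 - r)).
  by field; rewrite !gt_eqF.
have : r ^+ 2 / (x + 1) - r ^+ 2 / x = - (r ^+ 2 / (x * (x + 1))).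
  by field; rewrite !gt_eqF.
have : 0 <= r ^+ 2 * (1 - r) / (x * (x + 1) * (x + 1 - r)).
  apply: divr_ge0; first by rewrite mulr_ge0 ?sqr_ge0 ?subr_ge0.
  by rewrite !mulr_ge0 ?ltW.
lra.
Qed.

Lemma expR_telescope (f : nat -> R) {m n : nat} : (m <= n)%N ->
  expR (f n - f m) = \prod_(m <= i < n) expR (f i.+1 - f i).
Proof. by move=> mn; rewrite -telescope_sumr // expR_sum. Qed.

End Bounds.

Section EXBounds.
Context {R : realType} {r : R} {k N : nat}.
Hypotheses (r01 : 0 <= r <= 1) (k0 : (0 < k)%N) (kN : (k <= N)%N).

Lemma EX_le_expR :
  EX r k N <= expR (r * (ln k%:R - ln N%:R) + r / k%:R - r / N%:R).
Proof.
case/andP: r01 => r0 _; pose f m := - (r * ln m%:R) - r / m%:R.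
have -> : r * (ln k%:R - ln N%:R) + r / k%:R - r / N%:R = f N - f k by rewrite /f; ring.
rewrite EX_prod // (expR_telescope f kN)
  [X in X <= _]big_nat_cond [X in _ <= X]big_nat_cond.
apply: ler_prod => m /andP[/andP[km _] _]; rewrite /f -natr1.
have m0 : 0 < m%:R :> R by rewrite ltr0n (leq_trans k0).
by rewrite one_sub_div_le_expR // (le_trans (expR_ge0 _) (expR_le_one_sub_div r _ r01 m0)).
Qed.

Lemma expR_le_EX :
  expR (r * (ln k%:R - ln N%:R) - r ^+ 2 / k%:R + r ^+ 2 / N%:R) <= EX r k N.
Proof.
pose f m := - (r * ln m%:R) + r ^+ 2 / m%:R.
have -> : r * (ln k%:R - ln N%:R) - r ^+ 2 / k%:R + r ^+ 2 / N%:R = f N - f k.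
  by rewrite /f; ring.
rewrite EX_prod // (expR_telescope f kN)
  [X in X <= _]big_nat_cond [X in _ <= X]big_nat_cond.
apply: ler_prod => m /andP[/andP[km _] _]; rewrite /f -natr1 expR_ge0 /=.
by apply: expR_le_one_sub_div => //; rewrite ltr0n (leq_trans k0).
Qed.

End EXBounds.

Theorem lemma3p2 (R : realType) (r : R) (N k : nat) :
  0 < r < 1 -> (1 <= N)%N -> (1 <= k <= N)%N ->
  (k%:R / N%:R) `^ r * expR (- (r ^+ 2) / k%:R) <= EX r k N /\
  EX r k N <= (k%:R / N%:R) `^ r * expR (r / k%:R).
Proof.
move=> /andP[r0 r1] _ /andP[k0 kN].
have r01 : 0 <= r <= 1 by rewrite !ltW.
have kR : 0 < k%:R :> R by rewrite ltr0n.
have NR : 0 < N%:R :> R by rewrite ltr0n (leq_trans k0).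
have -> : (k%:R / N%:R) `^ r = expR (r * (ln k%:R - ln N%:R)).
  by rewrite /powR gt_eqF ?divr_gt0 // ln_div ?posrE.
rewrite -!expRD; split.
  apply: le_trans; last exact: expR_le_EX r01 k0 kN.
  rewrite ler_expR.
  have : 0 <= r ^+ 2 / N%:R by rewrite divr_ge0 ?sqr_ge0 ?ltW.
  rewrite /(_ / _); lra.
apply: le_trans (EX_le_expR r01 k0 kN) _; rewrite ler_expR.
have : 0 <= r / N%:R by rewrite divr_ge0 ?ltW.
rewrite /(_ / _); lra.
Qed.
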